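(* Let $N\ge 1$ and $d$ be integers and let $d_1,\dots,d_N,\rho_1,\dots,\rho_N$ be integers with $$0\le d_1<\rho_N\le d_2<\rho_{N-1}\le d_3<\dots\le d_N<\rho_1\le d .$$ Put $m=d-\sum_{l=1}^N\rho_l+\sum_{l=1}^N d_l$ and assume $m>0$. Let $$\mathcal L=\{d_1+1,\dots,\rho_N-1\}\cup\{d_2+1,\dots,\rho_{N-1}-1\}\cup\dots\cup\{d_N+1,\dots,\rho_1-1\}$$ (so $|\mathcal L|=d-m-N=:K$). Then there exist unique complex constants $C_1,\dots,C_K$ such that the polynomial $$P(x)=(x+1)^{m+N}+C_1(x+1)^{m+N+1}+\dots+C_K(x+1)^{d}$$ has zero coefficient of $x^l$ for every $l\in\mathcal L$; equivalently, the $K\times K$ linear system $\binom{m+N}{l_i}+\sum_{j=1}^{K}C_j\binom{m+N+j}{l_i}=0$, $1\le i\le K$ (where $l_1,\dots,l_K$ are the elements of $\mathcal L$), has nonzero determinant. *)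

From mathcomp Require Import all_boot all_order all_algebra.
From mathcomp Require Import complex.
From mathcomp Require Import Rstruct.
From Stdlib Require Import Reals.

Set Implicit Arguments.
Unset Strict Implicit.
Unset Printing Implicit Defensive.
Import Order.TTheory GRing.Theory Num.Theory.

Definition Cplx := complex Rdefinitions.R.

(* Indices l = 1..N of the sequences d_l and rho_l; values at other indices
   are irrelevant. *)

(* The exceptional set L: l is in L iff d_i < l < rho_{N+1-i} for some
   i in {1..N} (here i = j+1 with j : 'I_N). *)
Definition inL (N : nat) (dd rho : nat -> nat) (l : nat) : bool :=
  [exists j : 'I_N, (dd j.+1 < l) && (l < rho (N - j))].

(* m = d - sum rho_l + sum d_l (as a natural number; positivity is a
   separate hypothesis of the theorem). *)
Definition mval (N d : nat) (dd rho : nat -> nat) : nat :=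
  (d + \sum_(1 <= l < N.+1) dd l - \sum_(1 <= l < N.+1) rho l)%N.

Definition Kval (N d : nat) (dd rho : nat -> nat) : nat :=
  (d - mval N d dd rho - N)%N.

Local Open Scope ring_scope.

(* P(x) = (x+1)^(m+N) + sum_{j=1}^K C_j (x+1)^(m+N+j); the j-th constant
   C_j is c (j-1) for c indexed by 'I_K. *)
Definition Ppoly (m N K : nat) (c : {ffun 'I_K -> Cplx}) : {poly Cplx} :=
  ('X + 1) ^+ (m + N) + \sum_(j < K) c j *: ('X + 1) ^+ (m + N + j.+1).

From mathcomp Require Import all_boot all_order all_algebra.
From mathcomp Require Import complex Rstruct.
From mathcomp Require Import ring zify.

Set Implicit Arguments.
Unset Strict Implicit.
Unset Printing Implicit Defensive.
Import GRing.Theory Num.Theory.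

(* The conditions on C_1, ..., C_K form a square linear system, so it is
   enough that the homogeneous system only has the trivial solution.  A
   homogeneous solution c yields Q = (x+1)^(m+N+1) * sum_j c_j (x+1)^(j-1),
   whose coefficients vanish on L and above degree d = m+N+K: Q has at most
   m+N+1 nonzero coefficients, yet a root of multiplicity m+N+1 at -1.  A
   polynomial with at most k nonzero coefficients and a nonzero root of
   multiplicity k is zero, hence Q = 0 and c = 0. *)

Lemma count_itv_iota (a b n : nat) :
  count (fun l => a < l < b) (iota 0 n) = minn n b - minn n a.+1.
Proof.
elim: n => [|n IH]; first by rewrite /=; lia.
rewrite -[in iota 0 _]addn1 iotaD count_cat IH /= add0n addn0.
by case: (ltnP a n) => ?; case: (ltnP n b) => ? /=; lia.
Qed.

Definition in_gaps (a b : nat -> nat) (N l : nat) : bool :=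
  [exists j : 'I_N, a j.+1 < l < b j.+1].

Section Gaps.
Variables a b : nat -> nat.

Lemma in_gaps0 l : in_gaps a b 0 l = false.
Proof. by apply/existsP => -[[]]. Qed.

Lemma in_gapsS N l : in_gaps a b N.+1 l = in_gaps a b N l || (a N.+1 < l < b N.+1).
Proof.
apply/existsP/orP => [[j lj]|[/existsP[j lj]|lN]].
- have [jN|jN] := ltnP j N; first by left; apply/existsP; exists (Ordinal jN).
  by right; have /eqP <- : j == N :> nat by rewrite eqn_leq -ltnS ltn_ord.
- by exists (widen_ord (leqnSn N) j).
- by exists ord_max.
Qed.

Variable N : nat.
Hypothesis gap_ltn : forall i, 0 < i <= N -> a i < b i.
Hypothesis gap_sorted : forall i, 0 < i < N -> b i <= a i.+1.

Lemma in_gaps_ltn n l : n <= N -> in_gaps a b n l -> l < b n.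
Proof.
elim: n => [|n IH] nN; first by rewrite in_gaps0.
rewrite in_gapsS => /orP[lin|/andP[] //].
have n0 : 0 < n by case: (n) lin; rewrite ?in_gaps0.
have := IH (ltnW nN) lin; have := @gap_ltn n.+1; have := @gap_sorted n; lia.
Qed.

Lemma count_in_gaps n m : n <= N -> (0 < n -> b n <= m) ->
  count (in_gaps a b n) (iota 0 m) = \sum_(i < n) (b i.+1 - (a i.+1).+1).
Proof.
elim: n => [|n IH] nN bm.
  by rewrite big_ord0 (eq_count in_gaps0) count_pred0.
have disj l : in_gaps a b n l -> ~~ (a n.+1 < l < b n.+1).
  move=> lin; have n0 : 0 < n by case: (n) lin; rewrite ?in_gaps0.
  have := in_gaps_ltn (ltnW nN) lin; have := @gap_sorted n; lia.
rewrite big_ord_recr /= -IH; first last.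
- move=> n0; have := @gap_sorted n; have := @gap_ltn n.+1; have := bm isT; lia.
- exact: ltnW.
have := count_predUI (in_gaps a b n) (fun l => a n.+1 < l < b n.+1) (iota 0 m).
rewrite (eq_count (a1 := predI _ _) (a2 := pred0)); last first.
  by move=> l /=; apply/negbTE/andP => -[/disj/negP].
rewrite count_pred0 addn0 count_itv_iota.
have -> : minn m (b n.+1) - minn m (a n.+1).+1 = b n.+1 - (a n.+1).+1.
  have := bm isT; have := @gap_ltn n.+1; lia.
by move=> <-; apply: eq_count => l; rewrite in_gapsS.
Qed.
End Gaps.

Local Open Scope ring_scope.

Lemma sparse_poly_mult_root_eq0 (F : numDomainType) (a : F) (k : nat)
    (p r : {poly F}) (S : seq nat) :
  a != 0 -> (size S <= k)%N -> (forall i, p`_i != 0 -> i \in S) ->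
  p = r * ('X - a%:P) ^+ k -> p = 0.
Proof.
move=> a0; elim: k p r S => [|k IH] p r S sizeS suppS pE.
  apply/polyP=> i; rewrite coef0; apply/eqP/negPn/negP => /suppS.
  by move: sizeS; rewrite leqn0 => /nilP ->.
have pa0 : p.[a] = 0 by rewrite pE hornerM horner_exp hornerXsubC subrr expr0n /= mulr0.
have [//|p0] := eqVneq p 0.
set c := (size p).-1.
have pc0 : p`_c != 0 by rewrite -lead_coefE lead_coef_eq0.
(* [X p' - c p] has no term of degree c, and is still divisible by (X - a)^k *)
pose q := 'X * p^`() - p *+ c.
have coef_q i : q`_i = p`_i *+ i - p`_i *+ c.
  by rewrite coefB coefMn coefXM coef_deriv; case: i => [|i] //=; rewrite mulr0n.
have q0 : q = 0.
  apply: (IH q ('X * (r^`() * ('X - a%:P) + r *+ k.+1) - r * ('X - a%:P) *+ c)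
              (rem c S)).
  - by rewrite size_rem ?suppS // -subn1 leq_subLR add1n.
  - move=> i; rewrite coef_q => qi0.
    have pi0 : p`_i != 0 by apply: contraNneq qi0 => ->; rewrite !mul0rn subrr.
    apply: rem_mem (suppS _ pi0).
    by apply: contraNneq qi0 => ->; rewrite subrr.
  - by rewrite /q pE derivM deriv_exp derivXsubC mul1r /= exprS; ring.
have pE' : p = p`_c *: 'X^c.
  apply/polyP=> i; rewrite coefZ coefXn.
  have [->|ic] := eqVneq i c; first by rewrite mulr1.
  rewrite mulr0; apply/eqP; move/eqP: (coef_q i); rewrite q0 coef0 eq_sym subr_eq0.
  rewrite -[p`_i *+ i]mulr_natr -[p`_i *+ c]mulr_natr -subr_eq0 -mulrBr.
  by rewrite mulf_eq0 subr_eq0 eqr_nat (negbTE ic) orbF.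
move: pa0; rewrite pE' hornerZ hornerXn => /eqP.
by rewrite mulf_eq0 expf_eq0 (negbTE pc0) (negbTE a0) andbF.
Qed.

Lemma coef_Xadd1_exp (R : nzSemiRingType) (n l : nat) :
  (('X + 1 : {poly R}) ^+ n)`_l = 'C(n, l)%:R.
Proof.
have -> : ('X + 1 : {poly R}) ^+ n = \poly_(i < n.+1) 'C(n, i)%:R.
  by rewrite exprD1n poly_def; apply: eq_bigr => i _; rewrite scaler_nat.
by rewrite coef_poly; case: ltnP => // ?; rewrite bin_small.
Qed.

Lemma linear_system_exists_unique (F : fieldType) (K : nat)
    (A : 'I_K -> 'I_K -> F) (b : 'I_K -> F) :
  (forall c : 'I_K -> F, (forall i, \sum_j c j * A j i = 0) -> forall j, c j = 0) ->
  exists! c : {ffun 'I_K -> F}, forall i, b i + \sum_j c j * A j i = 0.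
Proof.
move=> kerA0.
pose M : 'M[F]_K := \matrix_(j, i) A j i.
have mulM (u : 'rV[F]_K) i : (u *m M) 0 i = \sum_j u 0 j * A j i.
  by rewrite !mxE; apply: eq_bigr => j _; rewrite mxE.
have M_unit : M \in unitmx.
  rewrite -row_free_unit; apply: inj_row_free => u uM0; apply/rowP => j.
  rewrite mxE; apply: (kerA0 (u 0)) => i.
  by rewrite -mulM uM0 mxE.
pose u := - (\row_i b i) *m invmx M.
have u_sol i : b i + \sum_j u 0 j * A j i = 0.
  have := congr1 (fun v : 'rV[F]_K => v 0 i) (mulmxKV M_unit (- \row_i b i)).
  by rewrite /= mulM !mxE => ->; rewrite addrN.
exists [ffun j => u 0 j]; split=> [i|c' c'_sol].
  by rewrite (eq_bigr (fun j => u 0 j * A j i)) => [|j _]; rewrite ?u_sol ?ffunE.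
apply/ffunP => j; apply/eqP; rewrite -subr_eq0; apply/eqP; move: j.
apply: kerA0 => i.
rewrite (eq_bigr (fun j => u 0 j * A j i - c' j * A j i)) => [|j _]; last first.
  by rewrite ffunE mulrBl.
rewrite sumrB -[\sum_j u 0 j * A j i](addKr (b i)) u_sol.
by rewrite -[\sum_j c' j * A j i](addKr (b i)) c'_sol subrr.
Qed.

Lemma binomial_system_inj (F : numDomainType) (n K : nat) (L : pred nat)
    (c : 'I_K -> F) :
  count L (iota 0 (n + K).+1) = K ->
  (forall l, L l -> \sum_(j < K) c j * 'C(n + j.+1, l)%:R = 0) ->
  forall j, c j = 0.
Proof.
move=> countL c_sol.
pose R : {poly F} := \sum_(j < K) c j *: ('X + 1) ^+ j.
pose Q := R * ('X - (-1)%:P) ^+ n.+1.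
have coef_Q l : Q`_l = \sum_(j < K) c j * 'C(n + j.+1, l)%:R.
  rewrite /Q polyCN opprK polyC1 mulr_suml coef_sum; apply: eq_bigr => j _.
  by rewrite -scalerAl -exprD coefZ coef_Xadd1_exp addnC addSnnS.
have Q0 : Q = 0.
  apply: (sparse_poly_mult_root_eq0 (a := -1) (k := n.+1) (r := R)
           (S := filter (predC L) (iota 0 (n + K).+1))) => //.
  - by rewrite oppr_eq0 oner_eq0.
  - have := count_predC L (iota 0 (n + K).+1).
    by rewrite size_filter size_iota countL; lia.
  - move=> l; rewrite coef_Q mem_filter mem_iota /= add0n => Ql0.
    apply/andP; split; first by apply: contra Ql0 => /c_sol ->.
    rewrite ltnNge; apply: contra Ql0 => nKl.
    rewrite big1 // => j _; rewrite bin_small ?mulr0 //.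
    by apply: leq_trans nKl; rewrite ltnS leq_add2l ltn_ord.
have R0 : R = 0.
  move/eqP: Q0; rewrite mulf_eq0 expf_eq0 polyXsubC_eq0 andbF orbF.
  by move/eqP.
pose C : {poly F} := \sum_(j < K) c j *: 'X^j.
have R_comp : R = C \Po ('X + 1).
  rewrite /C linear_sum; apply: eq_bigr => j _.
  by rewrite /= comp_polyZ comp_Xn_poly.
have C0 : C = 0.
  by apply/eqP; rewrite -(comp_poly2_eq0 _ (size_XaddC 1)) polyC1 -R_comp R0.
move=> j; move/(congr1 (coefp j)): C0; rewrite /= coef_sumMXn coef0.
by rewrite (big_pred1 j) // => i /=; rewrite andTb.
Qed.

Lemma coef_Ppoly (m N K : nat) (c : {ffun 'I_K -> Cplx}) (l : nat) :
  (Ppoly m N c)`_l = 'C(m + N, l)%:R + \sum_(j < K) c j * 'C(m + N + j.+1, l)%:R.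
Proof.
rewrite coefD coef_Xadd1_exp coef_sum; congr (_ + _); apply: eq_bigr => j _.
by rewrite coefZ coef_Xadd1_exp.
Qed.

Section GapCount.
Local Open Scope nat_scope.
Variables (N d : nat) (dd rho : nat -> nat).
Hypothesis dd_lt_rho : forall i, 1 <= i <= N -> dd i < rho (N.+1 - i).
Hypothesis rho_le_dd : forall i, 1 <= i < N -> rho (N.+1 - i) <= dd i.+1.
Hypothesis rho1_le_d : rho 1 <= d.
Hypothesis m_gt0 : \sum_(1 <= l < N.+1) rho l < d + \sum_(1 <= l < N.+1) dd l.

Let b i := rho (N.+1 - i).

Lemma inL_in_gaps : inL N dd rho =1 in_gaps dd b N.
Proof. by move=> l; apply: eq_existsb => j; rewrite /b subSS. Qed.

Lemma inL_leq l : inL N dd rho l -> l <= d.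
Proof.
rewrite inL_in_gaps => /(in_gaps_ltn dd_lt_rho rho_le_dd (leqnn N)).
by rewrite /b subSnn => /ltnW/leq_trans; apply.
Qed.

Lemma sum_gap_sizes :
  \sum_(i < N) (b i.+1 - (dd i.+1).+1) + \sum_(1 <= l < N.+1) dd l + N
  = \sum_(1 <= l < N.+1) rho l.
Proof.
rewrite !big_add1 !big_mkord /= -[N in _ + N]card_ord -sum1_card -!big_split /=.
rewrite (reindex_inj rev_ord_inj); apply: eq_bigr => i _ /=.
have := @dd_lt_rho (rev_ord i).+1 (ltn_ord (rev_ord i)); rewrite /b /= subSS subKn // => lt_dd_rho.
by rewrite -addnA addn1 subnK.
Qed.

Lemma count_inL : count (inL N dd rho) (iota 0 d.+1) = Kval N d dd rho.
Proof.
rewrite (eq_count inL_in_gaps) (count_in_gaps dd_lt_rho rho_le_dd) //; last first.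
  by rewrite /b subSnn => _; apply: leqW.
by have := sum_gap_sizes; move: m_gt0; rewrite /Kval /mval /b; lia.
Qed.

Lemma mval_add_Kval : mval N d dd rho + N + Kval N d dd rho = d.
Proof.
move: sum_gap_sizes m_gt0; rewrite /Kval /mval /b; clear rho_le_dd rho1_le_d.
lia.
Qed.
End GapCount.

Theorem mainTheorem4 (N d : nat) (dd rho : nat -> nat)
  (hN : (1 <= N)%N)
  (h1 : forall i : nat, (1 <= i <= N)%N -> (dd i < rho (N.+1 - i))%N)
  (h2 : forall i : nat, (1 <= i < N)%N -> (rho (N.+1 - i) <= dd i.+1)%N)
  (h3 : (rho 1 <= d)%N)
  (hm : (\sum_(1 <= l < N.+1) rho l < d + \sum_(1 <= l < N.+1) dd l)%N) :
  exists! c : {ffun 'I_(Kval N d dd rho) -> Cplx},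
    forall l : nat, inL N dd rho l ->
      (Ppoly (mval N d dd rho) N c)`_l = 0.
Proof.
set L := inL N dd rho; set m := mval N d dd rho; set K := Kval N d dd rho.
have countL := count_inL h1 h2 h3 hm.
pose s := filter L (iota 0 d.+1).
have size_s : size s = K by rewrite size_filter countL.
have s_L (i : 'I_K) : L (nth 0%N s i).
  have : nth 0%N s i \in s by rewrite mem_nth ?size_s.
  by rewrite mem_filter => /andP[].
have s_onto l : L l -> exists i : 'I_K, l = nth 0%N s i.
  move=> Ll; have ls : l \in s by rewrite mem_filter Ll mem_iota ltnS (inL_leq h1 h2 h3).
  have li : (index l s < K)%N by rewrite -size_s index_mem.
  by exists (Ordinal li); rewrite nth_index.
have kernel_trivial (c : 'I_K -> Cplx) :
    (forall i : 'I_K, \sum_j c j * 'C(m + N + j.+1, nth 0%N s i)%:R = 0) ->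
    forall j, c j = 0.
  move=> c_sol; apply: (binomial_system_inj (n := m + N) (L := L)).
    by rewrite (mval_add_Kval h1 hm) countL.
  by move=> l /s_onto[i ->]; apply: c_sol.
have [c [c_sol c_uniq]] := linear_system_exists_unique
  (fun i => 'C(m + N, nth 0%N s i)%:R) kernel_trivial.
exists c; split=> [l /s_onto[i ->]|c' c'_sol]; first by rewrite coef_Ppoly; apply: c_sol.
by apply: c_uniq => i; rewrite -coef_Ppoly (c'_sol _ (s_L i)).
Qed.
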